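(* Let $T$ be a tree on at least three vertices and let $S \subseteq V(T)$ satisfy conditions (I) and (II) below. Then every vertex $v \in S$ lies on a path between two leaves $\ell, \ell' \in S$. (I) $S$ contains at least one leaf of $T$. (II) For every leaf $\ell \in S$, every edge $\{a,b\}$ of $T$ with $a$ closer to $\ell$ than $b$ satisfies: (i) if $a,b\notin S$ then $N(b)\cap S=\emptyset$; (ii) if $a\notin S$, $b\in S$ then $|N(b)\cap S|\le 1$; (iii) if $a\in S$, $b\notin S$ then $|(N(b)\cap S)\setminus\{a\}|=1$; (iv) if $a,b\in S$ then $|(N(b)\cap S)\setminus\{a\}|=0$.
   Context: $N(b)$ is the set of neighbors of $b$; distances are graph distances in $T$; a leaf is a vertex of degree one. *)

From mathcomp Require Import all_boot all_order.
Set Implicit Arguments. Unset Strict Implicit. Unset Printing Implicit Defensive.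

Section Graphs.
Variable T : finType.
Variable e : rel T.

Definition simple_graph := symmetric e /\ irreflexive e.

Definition is_tree :=
  [/\ simple_graph,
      (forall x y : T, connect e x y) &
      (forall p : seq T, ucycle e p -> size p < 3)].

Definition nbhd (b : T) : {set T} := [set y | e b y].

Definition leaf (x : T) : bool := #|nbhd x| == 1.

Fixpoint ball (x : T) (k : nat) : {set T} :=
  if k is k'.+1 then ball x k' :|: [set y | [exists z in ball x k', e z y]]
  else [set x].

(* graph distance (for connected graphs: the least k with y in ball x k;
   distances in a connected graph are < #|T|) *)
Definition gdist (x y : T) : nat := find (fun k => y \in ball x k) (iota 0 #|T|).

Definition on_path_between (x y v : T) : Prop :=
  exists p : seq T, [/\ path e x p, last x p = y, uniq (x :: p) & v \in x :: p].

End Graphs.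

From mathcomp Require Import all_boot all_order.
Set Implicit Arguments. Unset Strict Implicit. Unset Printing Implicit Defensive.

(* Only condition (II)(iii), for a single leaf l in S, is needed.  Follow the
   path from l to v and keep walking away from l: a vertex of S that is not a
   leaf has a neighbour further from l, and when the walk steps out of S,
   (iii) provides a neighbour further from l that is back in S.  So one of
   any two consecutive vertices of the walk is in S, and since a walk away
   from l in a tree never revisits a vertex, it stops at a leaf in S. *)

Section Graph.
Variables (T : finType) (e : rel T).

Lemma ballP x k y :
  reflect (exists p, [/\ path e x p, last x p = y & size p <= k]) (y \in ball e x k).
Proof.
elim: k y => [|k IHk] y /=.
  rewrite in_set1; apply: (iffP eqP) => [->|[[|? ?] [_ <- //]]].
  by exists [::].
rewrite in_setU in_set; apply: (iffP orP).
  case=> [/IHk [p [pxp <- lepk]]|/existsP [z /andP [/IHk [p [pxp <- lepk]] ezy]]].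
    by exists p; split => //; apply: leqW.
  by exists (rcons p y); rewrite rcons_path pxp ezy last_rcons size_rcons.
case=> p [pxp <- lepk].
have [|ltkp] := leqP (size p) k; first by left; apply/IHk; exists p.
right; apply/existsP; move: pxp lepk ltkp; case/lastP: p => [|p z] //.
rewrite rcons_path last_rcons size_rcons => /andP[pxp ez] lepk ltkp.
by exists (last x p); rewrite ez andbT; apply/IHk; exists p.
Qed.

Lemma gdist_eq x y k : k < #|T| -> y \in ball e x k ->
  (forall j, j < k -> y \notin ball e x j) -> gdist e x y = k.
Proof.
move=> ltkT yk yNj; rewrite /gdist; set P := fun j => y \in ball e x j.
have hasP : has P (iota 0 #|T|) by apply/hasP; exists k; rewrite ?mem_iota.
have ltfT : find P (iota 0 #|T|) < #|T| by rewrite -[X in _ < X](size_iota 0) -has_find.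
have [lt|gt|//] := ltngtP (find P (iota 0 #|T|)) k.
- by have := nth_find 0 hasP; rewrite /P nth_iota // add0n (negbTE (yNj _ lt)).
- by have := before_find 0 gt; rewrite /P nth_iota // add0n yk.
Qed.

Lemma nbhd_other a b : a \in nbhd e b -> ~~ leaf e b -> exists2 c, e b c & c != a.
Proof.
rewrite /leaf (cardsD1 a) => -> /=; rewrite add1n eqSS cards_eq0 => /set0Pn [c].
by rewrite !inE => /andP[ca ebc]; exists c.
Qed.

End Graph.

Section Tree.
Variables (T : finType) (e : rel T).
Hypothesis esym : symmetric e.
Hypothesis eirr : irreflexive e.
Hypothesis acyc : forall p : seq T, ucycle e p -> size p < 3.

Lemma path_rev_sym x p : path e (last x p) (rev (belast x p)) = path e x p.
Proof. by rewrite rev_path; apply: eq_path => a b; rewrite esym. Qed.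

(* Otherwise [y :: a :: s], shortened, would be a cycle of length at least 3. *)
Lemma avoiding_path_nbr_eq y a s : e y a -> e y (last a s) -> path e a s ->
  y \notin a :: s -> a = last a s.
Proof.
move=> eya + pas; case: (shortenP pas) => s' pas' uas' sub eya' yNs.
apply/eqP/negPn/negP => neq.
have yNs' : y \notin a :: s'.
  by apply: contra yNs; rewrite !inE => /orP[->|/sub ->]; rewrite ?orbT.
have : ucycle e [:: y, a & s'].
  by rewrite /ucycle /cycle /= rcons_path eya pas' esym eya' yNs'.
by move/acyc; case: s' {pas' uas' sub eya' yNs'} neq; rewrite ?eqxx.
Qed.

Lemma tree_path_unique x p q : path e x p -> path e x q ->
  uniq (x :: p) -> uniq (x :: q) -> last x p = last x q -> p = q.
Proof.
elim: p x q => [|z p IHp] x [|z' q] //=.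
- by move=> _ _ _ /andP[xNq _] xq; rewrite xq mem_last in xNq.
- by move=> _ _ /andP[xNp _] _ xp; rewrite -xp mem_last in xNp.
move=> /andP[exz pzp] /andP[exz' pzq] /andP[xNp up] /andP[xNq uq] lpq.
have zz' : z = z'.
  have lz : last z (p ++ rev (belast z' q)) = z'.
    rewrite last_cat lpq.
    by case: q {pzq uq xNq lpq} => [|? q] //; rewrite rev_cons last_rcons.
  rewrite -lz; apply: (avoiding_path_nbr_eq (y := x)); rewrite ?lz //.
  - by rewrite cat_path pzp lpq path_rev_sym.
  rewrite -cat_cons mem_cat mem_rev negb_or xNp /=.
  by apply: contra xNq => /mem_belast.
by move: zz' pzq uq lpq => <- pzq uq lpq; rewrite (IHp z q).
Qed.

Lemma uniq_path_rcons x p b c : path e x (rcons p b) -> uniq (x :: rcons p b) ->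
  e b c -> c != last x p -> uniq (x :: rcons (rcons p b) c).
Proof.
rewrite rcons_path => /andP[pxp eab] uxpb ebc cNa.
rewrite -rcons_cons rcons_uniq uxpb andbT -rcons_cons mem_rcons in_cons negb_or.
have -> : c != b by apply: contraTneq ebc => ->; rewrite eirr.
apply/negP => cxp; move: pxp eab uxpb cNa; case/splitPl: cxp => p1 p2 lp1.
rewrite cat_path last_cat lp1 => /andP[_ pp2]; rewrite esym => eba uxpb.
apply/negP/negPn/eqP; apply: (avoiding_path_nbr_eq (y := b)) => //.
apply: contraL uxpb => bp2.
rewrite -rcons_cons rcons_uniq negb_and negbK -cat_cons mem_cat.
by move: bp2; rewrite in_cons => /orP[/eqP->|->]; rewrite -?lp1 ?mem_last ?orbT.
Qed.

Lemma gdist_uniq_path x p : path e x p -> uniq (x :: p) -> gdist e x (last x p) = size p.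
Proof.
move=> pxp uxp; apply: gdist_eq.
- by have := max_card (mem (x :: p)); rewrite (card_uniqP uxp).
- by apply/ballP; exists p.
move=> j ltjp; apply/ballP => -[q [pxq + lejq]].
case: (shortenP pxq) => q' pxq' uxq' subq' lq'.
have leq'q := uniq_leq_size (subseq_uniq (subseq_cons _ _) uxq') subq'.
rewrite (tree_path_unique pxq' pxp uxq' uxp lq') in leq'q.
by have := leq_trans leq'q lejq; rewrite leqNgt ltjp.
Qed.

Lemma gdist_lt_rcons x p b : path e x (rcons p b) -> uniq (x :: rcons p b) ->
  gdist e x (last x p) < gdist e x b.
Proof.
move=> pxpb uxpb.
have := gdist_uniq_path pxpb uxpb; rewrite last_rcons size_rcons => ->.
move: pxpb uxpb; rewrite rcons_path -rcons_cons rcons_uniq => /andP[pxp _] /andP[_ uxp].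
by rewrite gdist_uniq_path.
Qed.

Section Descent.
Variables (S : {set T}) (l : T).

Lemma descent_start v : l \in S -> leaf e l -> connect e l v ->
  v \in S -> exists p b, [/\ path e l (rcons p b), uniq (l :: rcons p b),
                            v \in l :: rcons p b & (last l p \in S) || (b \in S)].
Proof.
move=> lS ll /connectP [q plq ->]; case: (shortenP plq) => {q plq} s pls uls _.
case/lastP: s pls uls => [|p b] plpb ulpb; last first.
  by move=> bS; exists p, b; rewrite mem_last; rewrite last_rcons in bS; rewrite bS orbT.
have [c Nl] := cards1P ll.
have elc : e l c by have := set11 c; rewrite -Nl inE.
exists [::], c; rewrite /= elc lS mem_head inE; split => //.
by rewrite andbT; apply: contraTneq elc => ->; rewrite eirr.
Qed.

Hypothesis enter_S : forall a b, e a b -> gdist e l a < gdist e l b ->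
  a \in S -> b \notin S -> #|(nbhd e b :&: S) :\ a| = 1.

Lemma descent_step p b : path e l (rcons p b) -> uniq (l :: rcons p b) ->
  (last l p \in S) || (b \in S) -> ~~ ((b \in S) && leaf e b) ->
  exists c, [/\ e b c, c != last l p & (b \in S) || (c \in S)].
Proof.
move=> plpb ulpb inS notend.
have eab : e (last l p) b by move: plpb; rewrite rcons_path => /andP[].
have [bS|bNS] := boolP (b \in S).
  have ab : last l p \in nbhd e b by rewrite inE esym.
  have bNleaf : ~~ leaf e b by rewrite bS in notend.
  by have [c ebc ca] := nbhd_other ab bNleaf; exists c.
have aS : last l p \in S by rewrite (negbTE bNS) orbF in inS.
have /card_gt0P [c] : 0 < #|(nbhd e b :&: S) :\ last l p|.
  by rewrite enter_S // gdist_lt_rcons.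
by rewrite !inE => /and3P[ca ebc cS]; exists c; rewrite cS.
Qed.

Lemma descent p b : path e l (rcons p b) -> uniq (l :: rcons p b) ->
  (last l p \in S) || (b \in S) ->
  exists r, [/\ path e l (rcons p b ++ r), uniq (l :: rcons p b ++ r),
                last b r \in S & leaf e (last b r)].
Proof.
have [n] := ubnP (#|T| - size p); elim: n p b => // n IHn p b ltTpn plpb ulpb inS.
have [/andP[bS lb]|notend] := boolP ((b \in S) && leaf e b).
  by exists [::]; rewrite cats0.
have [c [ebc ca inS']] := descent_step plpb ulpb inS notend.
have plpbc : path e l (rcons (rcons p b) c) by rewrite rcons_path plpb last_rcons.
have ulpbc := uniq_path_rcons plpb ulpb ebc ca.
have inS2 : (last l (rcons p b) \in S) || (c \in S) by rewrite last_rcons.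
have [|r [plr ulr rS rleaf]] := IHn (rcons p b) c _ plpbc ulpbc inS2.
  have := max_card (mem (l :: rcons p b)); rewrite (card_uniqP ulpb) /= size_rcons => ltpT.
  by rewrite subnS -ltnS prednK // subn_gt0 ltnW.
by exists (c :: r); rewrite -cat_rcons.
Qed.

End Descent.
End Tree.

Theorem mainTheorem9 (T : finType) (e : rel T) (S : {set T}) :
  is_tree e -> 3 <= #|T| ->
  (* (I) *)
  (exists l, l \in S /\ leaf e l) ->
  (* (II) *)
  (forall l a b, l \in S -> leaf e l -> e a b -> gdist e l a < gdist e l b ->
     [/\ (a \notin S -> b \notin S -> nbhd e b :&: S = set0),
         (a \notin S -> b \in S -> #|nbhd e b :&: S| <= 1),
         (a \in S -> b \notin S -> #|(nbhd e b :&: S) :\ a| = 1) &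
         (a \in S -> b \in S -> #|(nbhd e b :&: S) :\ a| = 0)]) ->
  forall v, v \in S ->
    exists l l', [/\ l \in S /\ l' \in S, leaf e l, leaf e l', l != l' &
                     on_path_between e l l' v].
Proof.
move=> [[esym eirr] conn acyc] _ [l [lS ll]] II v vS.
have enter_S a b : e a b -> gdist e l a < gdist e l b ->
    a \in S -> b \notin S -> #|(nbhd e b :&: S) :\ a| = 1.
  by move=> eab lt_ab; case: (II l a b lS ll eab lt_ab).
have [p [b [plpb ulpb vp inS]]] := descent_start eirr lS ll (conn l v) vS.
have [r [plr ulr l'S l'leaf]] := descent esym eirr acyc enter_S plpb ulpb inS.
exists l, (last b r); split => //.
  move: ulr; rewrite cat_rcons /= mem_cat negb_or => /andP[/andP[_ lNbr] _].
  by apply: contraNneq lNbr => ->; exact: mem_last.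
exists (rcons p b ++ r); split => //; first by rewrite last_cat last_rcons.
by rewrite -cat_cons mem_cat vp.
Qed.
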